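(* Let $q$ be a prime power and $n\ge 1$. Fix an identification of the $3n$-dimensional $\mathrm{GF}(q)$-vector space $\mathrm{GF}(q)^{3n}$ underlying $\mathrm{PG}(3n-1,q)$ with $\mathrm{GF}(q^n)^3$ regarded as a $\mathrm{GF}(q)$-vector space. Let $\widehat{\mathcal O}_1$ and $\widehat{\mathcal O}_2$ be ovals of $\mathrm{PG}(2,q^n)$ and let $\mathcal O_1$, $\mathcal O_2$ be the elementary $n$-dimensional pseudo-ovals of $\mathrm{PG}(3n-1,q)$ arising from $\widehat{\mathcal O}_1$ and $\widehat{\mathcal O}_2$, respectively. Then $\mathcal O_1$ and $\mathcal O_2$ are projectively equivalent (i.e. some element of $\mathrm{P\Gamma L}(3n,q)$ maps $\mathcal O_1$ onto $\mathcal O_2$) if and only if $\widehat{\mathcal O}_1$ and $\widehat{\mathcal O}_2$ are projectively equivalent (i.e. some element of $\mathrm{P\Gamma L}(3,q^n)$ maps $\widehat{\mathcal O}_1$ onto $\widehat{\mathcal O}_2$).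
   Context: An oval of $\mathrm{PG}(2,q)$ is a set of $q+1$ points, no three collinear. An $n$-dimensional pseudo-oval in $\mathrm{PG}(3n-1,q)$ is a set of $q^n+1$ projective $(n-1)$-dimensional subspaces any three of which span $\mathrm{PG}(3n-1,q)$. Under the identification $\mathrm{GF}(q)^{3n}\cong \mathrm{GF}(q^n)^3$, each point of $\mathrm{PG}(2,q^n)$ (a $1$-dimensional $\mathrm{GF}(q^n)$-subspace) is an $n$-dimensional $\mathrm{GF}(q)$-subspace, i.e. an $(n-1)$-dimensional subspace of $\mathrm{PG}(3n-1,q)$. The image of an oval of $\mathrm{PG}(2,q^n)$ under this correspondence is an $n$-dimensional pseudo-oval of $\mathrm{PG}(3n-1,q)$; pseudo-ovals obtained in this way are called elementary, and are said to arise from the oval. *)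

From HB Require Import structures.
From mathcomp Require Import all_boot all_order all_algebra.
Set Implicit Arguments. Unset Strict Implicit. Unset Printing Implicit Defensive.
Import GRing.Theory.
Local Open Scope ring_scope.

Definition pg2_point (K : finFieldType) (P : {set 'rV[K]_3}) : Prop :=
  exists2 v : 'rV[K]_3, v != 0 & P = [set c *: v | c : K].

Definition pg2_collinear (K : finFieldType) (P1 P2 P3 : {set 'rV[K]_3}) : Prop :=
  exists2 l : 'rV[K]_3, l != 0 &
    forall v, v \in P1 :|: P2 :|: P3 -> v *m l^T = 0.

Definition oval (K : finFieldType) (O : {set {set 'rV[K]_3}}) : Prop :=
  [/\ forall P, P \in O -> pg2_point P,
      #|O| = #|K|.+1 &
      forall P1 P2 P3, P1 \in O -> P2 \in O -> P3 \in O ->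
        P1 != P2 -> P1 != P3 -> P2 != P3 -> ~ pg2_collinear P1 P2 P3].

Definition gammaL_map (K : finFieldType) (m : nat)
    (f : 'rV[K]_m -> 'rV[K]_m) : Prop :=
  exists (sigma : {rmorphism K -> K}) (A : 'M[K]_m),
    [/\ bijective sigma, A \in unitmx & forall v, f v = map_mx sigma v *m A].

Definition proj_equiv (K : finFieldType) (m : nat)
    (O1 O2 : {set {set 'rV[K]_m}}) : Prop :=
  exists2 f : 'rV[K]_m -> 'rV[K]_m, gammaL_map f &
    [set f @: (P : {set 'rV[K]_m}) | P in O1] = O2.

Definition identification (F L : finFieldType) (iota : {rmorphism F -> L})
    (n : nat) (phi : 'rV[L]_3 -> 'rV[F]_(3 * n)) : Prop :=
  bijective phi /\
  forall (a : F) (u v : 'rV[L]_3), phi (iota a *: u + v) = a *: phi u + phi v.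

Definition elementary_pseudo_oval (F L : finFieldType) (n : nat)
    (phi : 'rV[L]_3 -> 'rV[F]_(3 * n)) (O : {set {set 'rV[L]_3}}) :
    {set {set 'rV[F]_(3 * n)}} :=
  [set phi @: (P : {set 'rV[L]_3}) | P in O].

From HB Require Import structures.
From mathcomp Require Import all_boot all_order all_algebra finfield.
Import GRing.Theory.
Set Implicit Arguments. Unset Strict Implicit. Unset Printing Implicit Defensive.
Local Open Scope ring_scope.

(* An element of PGammaL(3, q^n) is transported by the identification to an
   element of PGammaL(3n, q), because every automorphism of GF(q^n) maps the
   subfield GF(q) onto itself.  Conversely, an element of PGammaL(3n, q) mapping
   the first pseudo-oval onto the second is transported back to an additive
   bijection h of GF(q^n)^3 that maps every point of the oval O1 onto a point of
   O2, and the point is that such an h is semilinear (over GF(2) every additive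
   map is linear).  Pick vectors p1, p2, p3 on three points of O1 such that
   p1 + p2 + p3 lies on a fourth one.  Comparing h on the fourth point with h
   on the first three shows that h scales all three by one additive map s, i.e.
   h (x p1 + y p2 + z p3) = s x h p1 + s y h p2 + s z h p3.  Since h maps the
   point through p1 + x p2 + y p3 onto a point, s (l x) = s l * s x for all l.
   The x with this property form an additive subgroup containing 0, 1 and the
   q^n - 2 values x of the points of O1 off the frame, which are nonzero and
   pairwise distinct because no three points of O1 are collinear.  This
   subgroup has more than half of the elements of GF(q^n), so it is the whole
   field and s is an automorphism. *)

Lemma add_morph0 (V W : zmodType) (f : V -> W) : {morph f : x y / x + y} -> f 0 = 0.
Proof. by move=> fD; apply: (addrI (f 0)); rewrite -fD !addr0. Qed.

Lemma scaler_injl (K : fieldType) (V : lmodType K) (v : V) :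
  v != 0 -> injective ( *:%R^~ v : K -> V).
Proof.
move=> v0 a b /eqP; rewrite -subr_eq0 -scalerBl scaler_eq0 (negbTE v0) orbF.
by rewrite subr_eq0 => /eqP.
Qed.

Lemma zmod_closed_card_setT (V : finZmodType) (S : {set V}) :
  {in S &, forall x y, x - y \in S} -> (#|V| < #|S| + #|S|)%N -> S = setT.
Proof.
move=> SB ltVS; apply/setP => x; rewrite inE; apply: contraLR ltVS => Sx.
rewrite -leqNgt -{2}(card_imset S (addIr x)) -(cardsC S) leq_add2l.
apply/subset_leq_card/subsetP => _ /imsetP [t St ->]; rewrite inE.
by apply: contra Sx => Stx; rewrite -(addKr t x) addrC SB.
Qed.

Lemma card2_finField_elts (K : finFieldType) (c : K) : #|K| = 2 -> c = 0 \/ c = 1.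
Proof.
move=> K2; suff /set2P : c \in [set 0; 1] by [].
suff -> : [set 0; 1] = [set: K] by rewrite inE.
by apply/eqP; rewrite eqEcard subsetT cardsT cards2 K2 eq_sym oner_neq0.
Qed.

Lemma imset_of_imsets (T U V : finType) (f : U -> V) (g : T -> U) (A : {set {set T}}) :
  [set f @: (X : {set U}) | X in [set g @: (P : {set T}) | P in A]]
  = [set (f \o g) @: (P : {set T}) | P in A].
Proof. by rewrite -imset_comp; apply: eq_imset => P; rewrite imset_comp. Qed.

Lemma imsets_id (T : finType) (f : T -> T) (A : {set {set T}}) :
  f =1 id -> [set f @: (P : {set T}) | P in A] = A.
Proof.
move=> fE; rewrite -[RHS]imset_id; apply: eq_imset => P.
by rewrite -[RHS]imset_id; apply: eq_imset.
Qed.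

Lemma four_distinct (T : finType) (A : {set T}) : (3 < #|A|)%N ->
  exists x1 x2 x3 x4,
    [/\ [/\ x1 \in A, x2 \in A, x3 \in A & x4 \in A] & uniq [:: x1; x2; x3; x4]].
Proof.
rewrite cardE; move: (mem_enum A) (enum_uniq A).
case: (enum A) => [|x1 [|x2 [|x3 [|x4 s]]]] // memA uniqA _.
exists x1, x2, x3, x4; split; first by split; rewrite -memA !inE eqxx ?orbT.
by move: uniqA; rewrite -[_ :: _]/([:: x1; x2; x3; x4] ++ s) cat_uniq => /andP [].
Qed.

Lemma rmorph_stable_subfield (F L : finFieldType) (iota : {rmorphism F -> L})
    (sigma : {rmorphism L -> L}) (a : F) :
  exists b, iota b = sigma (iota a).
Proof.
pose q := #|F|; pose R := [set x : L | x ^+ q == x].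
have imR : iota @: setT \subset R.
  by apply/subsetP => _ /imsetP [b _ ->]; rewrite inE -rmorphXn expf_card.
have cardR : (#|R| <= q)%N.
  have size_p : size ('X^q - 'X : {poly L}) = q.+1.
    by rewrite size_polyDl ?size_polyXn // size_polyN size_polyX ltnS card_finNzRing_gt1.
  rewrite cardE -ltnS -size_p; apply: max_poly_roots; last exact: enum_uniq.
    by rewrite -size_poly_eq0 size_p.
  by apply/allP => x; rewrite mem_enum inE => /eqP xq; rewrite /root !hornerE xq subrr.
have imRE : iota @: setT = R.
  by apply/eqP; rewrite eqEcard imR card_imset ?cardsT //; apply: fmorph_inj.
have : sigma (iota a) \in R by rewrite inE -!rmorphXn expf_card.
by rewrite -imRE => /imsetP [b _ ->]; exists b.
Qed.

Lemma rmorph_restrict_subfield (F L : finFieldType) (iota : {rmorphism F -> L})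
    (sigma : {rmorphism L -> L}) :
  exists tau : F -> F,
    [/\ {morph tau : x y / x + y}, {morph tau : x y / x * y}, tau 1 = 1
      & forall a, iota (tau a) = sigma (iota a)].
Proof.
have [tau tauK] := fin_all_exists (rmorph_stable_subfield iota sigma).
exists tau; split=> // [x y | x y |]; apply: (fmorph_inj iota).
- by rewrite rmorphD !tauK !rmorphD.
- by rewrite rmorphM !tauK !rmorphM.
- by rewrite tauK !rmorph1.
Qed.

Lemma rmorphism_of (K : pzRingType) (s : K -> K) :
  {morph s : x y / x + y} -> {morph s : x y / x * y} -> s 1 = 1 ->
  exists s' : {rmorphism K -> K}, s' =1 s.
Proof.
move=> sD sM s1.
have sB : {morph s : x y / x - y}.
  by move=> x y; apply: (addIr (s y)); rewrite -sD !subrK.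
by exists (HB.pack_for {rmorphism K -> K} s
  (GRing.isZmodMorphism.Build K K s sB)
  (GRing.isMonoidMorphism.Build K K s (conj s1 sM))).
Qed.

Lemma gammaL_map_semilinear (K : finFieldType) m (f : 'rV[K]_m -> 'rV[K]_m) :
  gammaL_map f -> exists s : {rmorphism K -> K},
    [/\ injective f, {morph f : x y / x + y} & forall c x, f (c *: x) = s c *: f x].
Proof.
case=> s [A [_ A_unit fE]]; exists s; split=> [x y||c x].
- by rewrite !fE => /(can_inj (mulmxK A_unit)) /map_mx_inj; apply; apply: fmorph_inj.
- by move=> x y; rewrite !fE map_mxD mulmxDl.
- by rewrite !fE map_mxZ scalemxAl.
Qed.

Lemma semilinear_gammaL_map (K : finFieldType) m (s : K -> K)
    (f : 'rV[K]_m -> 'rV[K]_m) :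
  {morph s : x y / x + y} -> {morph s : x y / x * y} -> s 1 = 1 ->
  injective f -> {morph f : x y / x + y} -> (forall c x, f (c *: x) = s c *: f x) ->
  gammaL_map f.
Proof.
move=> sD sM s1 f_inj fD fZ; have [s' s'E] := rmorphism_of sD sM s1.
have {s sD sM s1 s'E}fZ c x : f (c *: x) = s' c *: f x by rewrite s'E.
have f0 := add_morph0 fD.
pose A := \matrix_(i < m) f 'e_i.
have fE v : f v = map_mx s' v *m A.
  rewrite mulmx_sum_row {1}(row_sum_delta v) (big_morph f fD f0).
  by apply: eq_bigr => i _; rewrite fZ rowK mxE.
have [t _ ts] := injF_bij (fmorph_inj s').
exists s', A; split=> //; first exact: injF_bij (fmorph_inj s').
rewrite -row_free_unit; apply/inj_row_free => w wA0.
have tw0 : map_mx t w = 0.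
  by apply: f_inj; rewrite fE f0 -map_mx_comp (map_mx_id ts).
rewrite -[w](map_mx_id ts) map_mx_comp tw0.
by apply/matrixP => i j; rewrite !mxE rmorph0.
Qed.

Section ProjectivePlane.
Variable K : finFieldType.
Implicit Types (P : {set 'rV[K]_3}) (u v : 'rV[K]_3).

Lemma point_span P v : pg2_point P -> v \in P -> v != 0 -> P = [set c *: v | c : K].
Proof.
case=> w _ -> /imsetP [c _ ->]; rewrite scaler_eq0 negb_or => /andP [c0 _].
apply/setP => u; apply/imsetP/imsetP => [] [d _ ->].
- by exists (d / c) => //; rewrite scalerA mulfVK.
- by exists (d * c) => //; rewrite scalerA.
Qed.

Definition point_rep P := odflt 0 [pick v in P | v != 0].

Lemma point_repP P : pg2_point P -> point_rep P \in P /\ point_rep P != 0.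
Proof.
case=> w w0 eP; rewrite /point_rep; case: pickP => [v /andP [] // | none].
have := none w; rewrite w0 andbT => /negP; case; rewrite eP.
by apply/imsetP; exists 1; rewrite ?scale1r.
Qed.

Lemma point_has_neq0 P : pg2_point P -> exists2 v, v \in P & v != 0.
Proof. by case/point_repP; exists (point_rep P). Qed.

Lemma point_scale P v c : pg2_point P -> v \in P -> c *: v \in P.
Proof.
by case=> w _ -> /imsetP [d _ ->]; rewrite scalerA; apply/imsetP; exists (c * d).
Qed.

Definition frame u1 u2 u3 : 'M[K]_3 := \matrix_(i < 3) [:: u1; u2; u3]`_i.

Definition vec3 (a b c : K) : 'rV[K]_3 := \row_(j < 3) [:: a; b; c]`_j.

Lemma vec3_mul_frame a b c u1 u2 u3 :
  vec3 a b c *m frame u1 u2 u3 = a *: u1 + b *: u2 + c *: u3.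
Proof. by rewrite mulmx_sum_row !big_ord_recl big_ord0 !mxE !rowK addr0 addrA. Qed.

Definition frame_coord u1 u2 u3 v := v *m invmx (frame u1 u2 u3).

Lemma frame_coordP u1 u2 u3 v : frame u1 u2 u3 \in unitmx ->
  v = frame_coord u1 u2 u3 v 0 0 *: u1 + frame_coord u1 u2 u3 v 0 1 *: u2
    + frame_coord u1 u2 u3 v 0 2 *: u3.
Proof.
move=> M_unit; rewrite -vec3_mul_frame -[LHS](mulmxKV M_unit); congr (_ *m _).
apply/rowP => j; rewrite [RHS]mxE.
by case: j => [[|[|[|//]]]] /= j3; congr (_ _ _); apply: val_inj.
Qed.

Lemma frame_coords_inj u1 u2 u3 a b c a' b' c' : frame u1 u2 u3 \in unitmx ->
  a *: u1 + b *: u2 + c *: u3 = a' *: u1 + b' *: u2 + c' *: u3 ->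
  [/\ a = a', b = b' & c = c'].
Proof.
rewrite -row_free_unit -!vec3_mul_frame => /row_free_inj /[apply] /rowP e.
by move: (e 0) (e 1) (e 2); rewrite !mxE.
Qed.

Lemma collinear_of_form P1 P2 P3 u1 u2 u3 (l : 'rV[K]_3) :
  pg2_point P1 -> pg2_point P2 -> pg2_point P3 ->
  u1 \in P1 -> u2 \in P2 -> u3 \in P3 -> u1 != 0 -> u2 != 0 -> u3 != 0 ->
  l != 0 -> u1 *m l^T = 0 -> u2 *m l^T = 0 -> u3 *m l^T = 0 ->
  pg2_collinear P1 P2 P3.
Proof.
move=> pt1 pt2 pt3 u1P u2P u3P u1_0 u2_0 u3_0 l0 ul1 ul2 ul3; exists l => // v.
rewrite !inE (point_span pt1 u1P u1_0) (point_span pt2 u2P u2_0).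
rewrite (point_span pt3 u3P u3_0).
by case/orP => [/orP[]|] /imsetP [c _ ->]; rewrite -scalemxAl ?ul1 ?ul2 ?ul3 scaler0.
Qed.

Lemma noncollinear_frame_unit P1 P2 P3 u1 u2 u3 :
  pg2_point P1 -> pg2_point P2 -> pg2_point P3 ->
  u1 \in P1 -> u2 \in P2 -> u3 \in P3 -> u1 != 0 -> u2 != 0 -> u3 != 0 ->
  ~ pg2_collinear P1 P2 P3 -> frame u1 u2 u3 \in unitmx.
Proof.
move=> pt1 pt2 pt3 u1P u2P u3P u1_0 u2_0 u3_0 ncol.
rewrite -unitmx_tr -row_free_unit; apply/inj_row_free => l Ml0.
apply/eqP; apply: contraT => l0; case: ncol.
have ul i : row i (frame u1 u2 u3) *m l^T = 0.
  by rewrite -row_mul -[_ *m _]trmxK trmx_mul trmxK Ml0 trmx0 row0.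
apply: (collinear_of_form pt1 pt2 pt3 u1P u2P u3P u1_0 u2_0 u3_0 l0).
- by have := ul 0; rewrite rowK.
- by have := ul 1; rewrite rowK.
- by have := ul 2; rewrite rowK.
Qed.

End ProjectivePlane.

Section Ovals.
Variables (K : finFieldType) (O : {set {set 'rV[K]_3}}).
Hypothesis ovalO : oval O.

Lemma oval_point P : P \in O -> pg2_point P.
Proof. by case: ovalO => pt _ _; apply: pt. Qed.

Lemma oval_frame_unit P1 P2 P3 u1 u2 u3 :
  P1 \in O -> P2 \in O -> P3 \in O -> P1 != P2 -> P1 != P3 -> P2 != P3 ->
  u1 \in P1 -> u2 \in P2 -> u3 \in P3 -> u1 != 0 -> u2 != 0 -> u3 != 0 ->
  frame u1 u2 u3 \in unitmx.
Proof.
case: ovalO => _ _ ncol P1O P2O P3O P12 P13 P23 u1P u2P u3P u1_0 u2_0 u3_0.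
apply: (noncollinear_frame_unit (oval_point P1O) (oval_point P2O) (oval_point P3O)
  u1P u2P u3P u1_0 u2_0 u3_0).
exact: ncol.
Qed.

Lemma oval_frame_coords_inj P1 P2 P3 u1 u2 u3 a b c a' b' c' :
  P1 \in O -> P2 \in O -> P3 \in O -> P1 != P2 -> P1 != P3 -> P2 != P3 ->
  u1 \in P1 -> u2 \in P2 -> u3 \in P3 -> u1 != 0 -> u2 != 0 -> u3 != 0 ->
  a *: u1 + b *: u2 + c *: u3 = a' *: u1 + b' *: u2 + c' *: u3 ->
  [/\ a = a', b = b' & c = c'].
Proof.
move=> P1O P2O P3O P12 P13 P23 u1P u2P u3P u1_0 u2_0 u3_0.
exact/frame_coords_inj/(oval_frame_unit P1O P2O P3O P12 P13 P23 u1P u2P u3P).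
Qed.

Lemma oval_normal_frame : (2 < #|K|)%N ->
  exists P1 P2 P3 P4 p1 p2 p3,
  [/\ [/\ P1 \in O, P2 \in O, P3 \in O & P4 \in O],
      [/\ P1 != P2, P1 != P3 & P2 != P3],
      [/\ p1 \in P1, p2 \in P2 & p3 \in P3],
      [/\ p1 != 0, p2 != 0 & p3 != 0] & p1 + p2 + p3 \in P4].
Proof.
move=> q_gt2; have [_ cardO _] := ovalO.
have [|P1 [P2 [P3 [P4 [[P1O P2O P3O P4O]]]]]] := @four_distinct _ O.
  by rewrite cardO.
rewrite /= !inE !negb_or => /and4P [/and3P [P12 P13 P14] /andP [P23 P24] P34 _].
have [v1 v1P v1_0] := point_has_neq0 (oval_point P1O).
have [v2 v2P v2_0] := point_has_neq0 (oval_point P2O).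
have [v3 v3P v3_0] := point_has_neq0 (oval_point P3O).
have [v4 v4P v4_0] := point_has_neq0 (oval_point P4O).
have [a [b [c v4E]]] : exists a b c, v4 = a *: v1 + b *: v2 + c *: v3.
  by do 3!eexists; apply/frame_coordP/(oval_frame_unit P1O P2O P3O).
(* A vanishing coordinate of v4 would make v4 dependent on two of v1, v2, v3. *)
have a0 : a != 0.
  apply/eqP => a0; suff: 0 *: v2 + 0 *: v3 + 1 *: v4 = b *: v2 + c *: v3 + 0 *: v4.
    by case/(oval_frame_coords_inj P2O P3O P4O) => // _ _ /eqP; rewrite oner_eq0.
  by rewrite !scale0r scale1r !add0r addr0 v4E a0 scale0r add0r.
have b0 : b != 0.
  apply/eqP => b0; suff: 0 *: v1 + 0 *: v3 + 1 *: v4 = a *: v1 + c *: v3 + 0 *: v4.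
    by case/(oval_frame_coords_inj P1O P3O P4O) => // _ _ /eqP; rewrite oner_eq0.
  by rewrite !scale0r scale1r !add0r addr0 v4E b0 scale0r addr0.
have c0 : c != 0.
  apply/eqP => c0; suff: 0 *: v1 + 0 *: v2 + 1 *: v4 = a *: v1 + b *: v2 + 0 *: v4.
    by case/(oval_frame_coords_inj P1O P2O P4O) => // _ _ /eqP; rewrite oner_eq0.
  by rewrite !scale0r scale1r !add0r addr0 v4E c0 scale0r addr0.
exists P1, P2, P3, P4, (a *: v1), (b *: v2), (c *: v3); split=> //; last by rewrite -v4E.
- by split; apply: point_scale => //; apply: oval_point.
- by split; rewrite scaler_eq0 negb_or ?a0 ?b0 ?c0.
Qed.

End Ovals.

Section OvalMap.
Variables (K : finFieldType) (O1 O2 : {set {set 'rV[K]_3}}).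
Hypotheses (ovalO1 : oval O1) (ovalO2 : oval O2).
Variable h : 'rV[K]_3 -> 'rV[K]_3.
Hypotheses (h_add : {morph h : x y / x + y}) (h_inj : injective h).
Implicit Types (P : {set 'rV[K]_3}).
Hypothesis h_ovals : [set h @: (P : {set 'rV[K]_3}) | P in O1] = O2.

Lemma h_neq0 v : v != 0 -> h v != 0.
Proof. by apply: contra => /eqP hv0; rewrite -(inj_eq h_inj) hv0 (add_morph0 h_add). Qed.

Lemma h_oval P : P \in O1 -> h @: P \in O2.
Proof. by move=> PO1; rewrite -h_ovals imset_f. Qed.

Lemma h_point_neq P Q : P != Q -> h @: P != h @: Q.
Proof. by apply: contra => /eqP /(imset_inj h_inj) ->. Qed.

Lemma h_scale P u l : P \in O1 -> u \in P -> u != 0 ->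
  exists mu, h (l *: u) = mu *: h u.
Proof.
move=> PO1 uP u0; have hP := oval_point ovalO2 (h_oval PO1).
have : h (l *: u) \in h @: P by apply/imset_f/(point_scale _ (oval_point ovalO1 PO1)).
by rewrite (point_span hP (imset_f h uP) (h_neq0 u0)) => /imsetP [mu _ ->]; exists mu.
Qed.

Section NormalFrame.

Variables (P1 P2 P3 P4 : {set 'rV[K]_3}) (p1 p2 p3 : 'rV[K]_3).
Hypotheses (P1O1 : P1 \in O1) (P2O1 : P2 \in O1) (P3O1 : P3 \in O1) (P4O1 : P4 \in O1).
Hypotheses (P12 : P1 != P2) (P13 : P1 != P3) (P23 : P2 != P3).
Hypotheses (p1P1 : p1 \in P1) (p2P2 : p2 \in P2) (p3P3 : p3 \in P3).
Hypotheses (p1_0 : p1 != 0) (p2_0 : p2 != 0) (p3_0 : p3 != 0).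
Hypothesis p4P4 : p1 + p2 + p3 \in P4.

Let p_coords_inj a b c a' b' c' :
  a *: p1 + b *: p2 + c *: p3 = a' *: p1 + b' *: p2 + c' *: p3 ->
  [/\ a = a', b = b' & c = c'].
Proof.
exact: (oval_frame_coords_inj ovalO1 P1O1 P2O1 P3O1 P12 P13 P23 p1P1 p2P2 p3P3).
Qed.

Let hp_coords_inj a b c a' b' c' :
  a *: h p1 + b *: h p2 + c *: h p3 = a' *: h p1 + b' *: h p2 + c' *: h p3 ->
  [/\ a = a', b = b' & c = c'].
Proof.
exact: (oval_frame_coords_inj ovalO2 (h_oval P1O1) (h_oval P2O1) (h_oval P3O1)
  (h_point_neq P12) (h_point_neq P13) (h_point_neq P23)
  (imset_f h p1P1) (imset_f h p2P2) (imset_f h p3P3)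
  (h_neq0 p1_0) (h_neq0 p2_0) (h_neq0 p3_0)).
Qed.

Lemma normal_neq0 x y : p1 + x *: p2 + y *: p3 != 0.
Proof.
apply/eqP => e; suff: 1 *: p1 + x *: p2 + y *: p3 = 0 *: p1 + 0 *: p2 + 0 *: p3.
  by case/p_coords_inj => /eqP; rewrite oner_eq0.
by rewrite scale1r e !scale0r !addr0.
Qed.

Definition frame_sigma l := odflt 0 [pick mu | h (l *: p1) == mu *: h p1].

Lemma h_scale_p1 l : h (l *: p1) = frame_sigma l *: h p1.
Proof.
rewrite /frame_sigma; case: pickP => [mu /eqP // | none].
by have [mu e] := h_scale l P1O1 p1P1 p1_0; move: (none mu); rewrite e eqxx.
Qed.

Lemma h_frame x y z :
  h (x *: p1 + y *: p2 + z *: p3)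
  = frame_sigma x *: h p1 + frame_sigma y *: h p2 + frame_sigma z *: h p3.
Proof.
suff hZ l : h (l *: p2) = frame_sigma l *: h p2 /\ h (l *: p3) = frame_sigma l *: h p3.
  by rewrite !h_add h_scale_p1 (hZ y).1 (hZ z).2.
have [mu2 e2] := h_scale l P2O1 p2P2 p2_0.
have [mu3 e3] := h_scale l P3O1 p3P3 p3_0.
have p4_0 : p1 + p2 + p3 != 0 by have := normal_neq0 1 1; rewrite !scale1r.
have [mu4 e4] := h_scale l P4O1 p4P4 p4_0.
suff: frame_sigma l *: h p1 + mu2 *: h p2 + mu3 *: h p3
      = mu4 *: h p1 + mu4 *: h p2 + mu4 *: h p3.
  by case/hp_coords_inj => sl4 mu24 mu34; rewrite e2 e3 sl4 mu24 mu34.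
by rewrite -h_scale_p1 -e2 -e3 -!h_add -!scalerDr e4 !h_add.
Qed.

Lemma frame_sigmaD : {morph frame_sigma : x y / x + y}.
Proof.
move=> x y; apply: (scaler_injl (h_neq0 p1_0)).
by rewrite /= scalerDl -!h_scale_p1 scalerDl h_add.
Qed.

Lemma frame_sigmaB : {morph frame_sigma : x y / x - y}.
Proof. by move=> x y; apply: (addIr (frame_sigma y)); rewrite -frame_sigmaD !subrK. Qed.

Lemma frame_sigma1 : frame_sigma 1 = 1.
Proof. by apply: (scaler_injl (h_neq0 p1_0)); rewrite /= -h_scale_p1 !scale1r. Qed.

Definition mult_set :=
  [set x | [forall l, frame_sigma (l * x) == frame_sigma l * frame_sigma x]].

Lemma mult_setP x :
  reflect (forall l, frame_sigma (l * x) = frame_sigma l * frame_sigma x)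
          (x \in mult_set).
Proof. by rewrite inE; apply: (iffP forallP) => sM l; apply/eqP/sM. Qed.

Lemma normal_coord_mult R x y :
  R \in O1 -> p1 + x *: p2 + y *: p3 \in R -> x \in mult_set.
Proof.
move=> RO1 rR; apply/mult_setP => l.
have [mu] := h_scale l RO1 rR (normal_neq0 x y).
rewrite !scalerDr !scalerA -{2}[p1]scale1r !h_frame frame_sigma1 !scalerDr !scalerA mulr1.
by case/hp_coords_inj => -> ->.
Qed.

Lemma mult_set0 : 0 \in mult_set.
Proof. by apply/mult_setP => l; rewrite mulr0 (add_morph0 frame_sigmaD) mulr0. Qed.

Lemma mult_set1 : 1 \in mult_set.
Proof. by apply/mult_setP => l; rewrite mulr1 frame_sigma1 mulr1. Qed.

Lemma mult_setB : {in mult_set &, forall x y, x - y \in mult_set}.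
Proof.
move=> x y /mult_setP sx /mult_setP sy; apply/mult_setP => l.
by rewrite mulrBr !frame_sigmaB sx sy mulrBr.
Qed.

Let p_frame_unit : frame p1 p2 p3 \in unitmx.
Proof. exact: (oval_frame_unit ovalO1 P1O1 P2O1 P3O1 P12 P13 P23 p1P1 p2P2 p3P3). Qed.

Definition slope R :=
  frame_coord p1 p2 p3 (point_rep R) 0 1 / frame_coord p1 p2 p3 (point_rep R) 0 0.

Lemma slope_normal R : R \in O1 -> R != P2 -> R != P3 ->
  exists y, p1 + slope R *: p2 + y *: p3 \in R.
Proof.
move=> RO1 RP2 RP3; have [rR r0] := point_repP (oval_point ovalO1 RO1).
move: (frame_coordP (point_rep R) p_frame_unit); rewrite /slope.
set r := point_rep R in rR r0 *.
set a := frame_coord _ _ _ r 0 0; set b := frame_coord _ _ _ r 0 1.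
set c := frame_coord _ _ _ r 0 2 => rE.
have a0 : a != 0.
  apply/eqP => a0; suff: 0 *: p2 + 0 *: p3 + 1 *: r = b *: p2 + c *: p3 + 0 *: r.
    case/(oval_frame_coords_inj ovalO1 P2O1 P3O1 RO1 P23 _ _ p2P2 p3P3 rR) => //.
    - by rewrite eq_sym.
    - by rewrite eq_sym.
    by move=> _ _ /eqP; rewrite oner_eq0.
  by rewrite !scale0r scale1r !add0r addr0 rE a0 scale0r add0r.
exists (c / a); have := point_scale a^-1 (oval_point ovalO1 RO1) rR.
by rewrite rE !scalerDr !scalerA mulVf // scale1r ![a^-1 * _]mulrC.
Qed.

Lemma slope_mult R : R \in O1 -> R != P2 -> R != P3 -> slope R \in mult_set.
Proof.
by move=> RO1 RP2 RP3; have [y] := slope_normal RO1 RP2 RP3; apply: normal_coord_mult.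
Qed.

Lemma slope_neq0 R : R \in O1 -> R != P1 -> R != P2 -> R != P3 -> slope R != 0.
Proof.
move=> RO1 RP1 RP2 RP3; have [y] := slope_normal RO1 RP2 RP3.
move=> rR; apply/eqP => x0; move: rR; rewrite x0 scale0r addr0 => rR.
have r0 : p1 + y *: p3 != 0 by have := normal_neq0 0 y; rewrite scale0r addr0.
suff: 0 *: p1 + 0 *: p3 + 1 *: (p1 + y *: p3) = 1 *: p1 + y *: p3 + 0 *: (p1 + y *: p3).
  case/(oval_frame_coords_inj ovalO1 P1O1 P3O1 RO1 P13 _ _ p1P1 p3P3 rR) => //.
  - by rewrite eq_sym.
  - by rewrite eq_sym.
  by move/eqP; rewrite eq_sym oner_eq0.
by rewrite !scale0r !scale1r !add0r addr0.
Qed.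

Lemma slope_inj : {in O1 :\ P1 :\ P2 :\ P3 &, injective slope}.
Proof.
move=> R R'; rewrite !inE => /and4P [RP3 RP2 RP1 RO1] /and4P [R'P3 R'P2 R'P1 R'O1] e.
apply/eqP; apply: contraT => RR'.
have [y rR] := slope_normal RO1 RP2 RP3; have [y' rR'] := slope_normal R'O1 R'P2 R'P3.
rewrite -e in rR'; set x := slope R in rR rR'.
suff: 1 *: (p1 + x *: p2 + y *: p3) + 0 *: (p1 + x *: p2 + y' *: p3) + 0 *: p3
    = 0 *: (p1 + x *: p2 + y *: p3) + 1 *: (p1 + x *: p2 + y' *: p3) + (y - y') *: p3.
  case/(oval_frame_coords_inj ovalO1 RO1 R'O1 P3O1 RR' RP3 R'P3 rR rR' p3P3
          (normal_neq0 _ _) (normal_neq0 _ _) p3_0).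
  by move/eqP; rewrite oner_eq0.
rewrite !scale0r !scale1r !addr0 add0r -[in RHS]addrA -[in RHS]scalerDl.
by rewrite [y' + _]addrC subrK.
Qed.

Lemma mult_setT : mult_set = setT.
Proof.
apply: zmod_closed_card_setT mult_setB _; have [_ cardO1 _] := ovalO1.
have cardK : #|K| = #|O1 :\ P1 :\ P2 :\ P3|.+2.
  apply: succn_inj; rewrite -cardO1 (cardsD1 P1 O1) (cardsD1 P2 (O1 :\ P1)).
  rewrite (cardsD1 P3 (O1 :\ P1 :\ P2)) !in_setD1 P1O1 P2O1 P3O1.
  by rewrite [P2 == _]eq_sym [P3 == P1]eq_sym [P3 == P2]eq_sym P12 P13 P23 !add1n.
rewrite cardK (cardsD1 0 mult_set) mult_set0 add1n addSn ltnS addnS ltnS.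
apply: (@leq_ltn_trans #|mult_set :\ 0%R|).
  rewrite -(card_in_imset slope_inj); apply/subset_leq_card/subsetP.
  move=> _ /imsetP [R /setD1P [RP3 /setD1P [RP2 /setD1P [RP1 RO1]]] ->].
  by rewrite in_setD1 slope_neq0 // slope_mult.
rewrite -[X in (X < _)%N]addn0 ltn_add2l; apply/card_gt0P.
by exists 1; rewrite in_setD1 oner_neq0 mult_set1.
Qed.

Lemma frame_sigmaM : {morph frame_sigma : x y / x * y}.
Proof.
by move=> x y; have /mult_setP : y \in mult_set by rewrite mult_setT inE.
Qed.

Lemma h_semilinear c v : h (c *: v) = frame_sigma c *: h v.
Proof.
rewrite (frame_coordP v p_frame_unit) !scalerDr !scalerA !h_frame.
by rewrite !frame_sigmaM !scalerDr !scalerA.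
Qed.

Lemma frame_semilinear : exists s : K -> K,
  [/\ {morph s : x y / x + y}, {morph s : x y / x * y}, s 1 = 1
    & forall c v, h (c *: v) = s c *: h v].
Proof.
by exists frame_sigma; split;
  [apply: frame_sigmaD | apply: frame_sigmaM | apply: frame_sigma1 | apply: h_semilinear].
Qed.

End NormalFrame.

Lemma oval_map_semilinear : exists s : K -> K,
  [/\ {morph s : x y / x + y}, {morph s : x y / x * y}, s 1 = 1
    & forall c v, h (c *: v) = s c *: h v].
Proof.
have [K2 | K_gt2] : #|K| = 2 \/ (2 < #|K|)%N.
  by have := card_finNzRing_gt1 K; rewrite leq_eqVlt => /orP [/eqP | ]; [left | right].
  exists id; split=> // c v.
  by case: (card2_finField_elts c K2) => ->;
    rewrite ?scale0r ?(add_morph0 h_add) ?scale1r.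
have [P1 [P2 [P3 [P4 [p1 [p2 [p3 [[P1O1 P2O1 P3O1 P4O1] [P12 P13 P23]
  [p1P1 p2P2 p3P3] [p1_0 p2_0 p3_0] p4P4]]]]]]]] := oval_normal_frame ovalO1 K_gt2.
exact: (frame_semilinear P1O1 P2O1 P3O1 P4O1 P12 P13 P23 p1P1 p2P2 p3P3
  p1_0 p2_0 p3_0 p4P4).
Qed.

End OvalMap.

Section Identification.
Variables (F L : finFieldType) (iota : {rmorphism F -> L}) (n : nat).
Variables (phi : 'rV[L]_3 -> 'rV[F]_(3 * n)) (psi : 'rV[F]_(3 * n) -> 'rV[L]_3).
Hypotheses (phiK : cancel phi psi) (psiK : cancel psi phi).
Hypothesis phi_lin : forall a u v, phi (iota a *: u + v) = a *: phi u + phi v.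

Let phiD : {morph phi : u v / u + v}.
Proof. by move=> u v; have := phi_lin 1 u v; rewrite rmorph1 !scale1r. Qed.

Let phiZ a u : phi (iota a *: u) = a *: phi u.
Proof. by have := phi_lin a u 0; rewrite !addr0 (add_morph0 phiD) addr0. Qed.

Let psiD : {morph psi : u v / u + v}.
Proof. by move=> u v; apply: (can_inj phiK); rewrite phiD !psiK. Qed.

Let psiZ a w : psi (a *: w) = iota a *: psi w.
Proof. by apply: (can_inj phiK); rewrite phiZ !psiK. Qed.

Lemma pseudo_oval_equiv_oval_equiv (O1 O2 : {set {set 'rV[L]_3}}) :
  oval O1 -> oval O2 ->
  proj_equiv (elementary_pseudo_oval phi O1) (elementary_pseudo_oval phi O2) ->
  proj_equiv O1 O2.
Proof.
move=> ovalO1 ovalO2 [g /gammaL_map_semilinear [_ [g_inj gD _]] g_ovals].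
pose h := psi \o g \o phi.
have h_inj : injective h by do 2!apply: inj_comp => //; apply: can_inj.
have h_add : {morph h : u v / u + v} by move=> u v; rewrite /h /= phiD gD psiD.
have h_ovals : [set h @: (P : {set 'rV[L]_3}) | P in O1] = O2.
  by rewrite -2!imset_of_imsets g_ovals imset_of_imsets imsets_id.
have [s [sD sM s1 hZ]] := oval_map_semilinear ovalO1 ovalO2 h_add h_inj h_ovals.
by exists h => //; apply: semilinear_gammaL_map sD sM s1 h_inj h_add hZ.
Qed.

Lemma oval_equiv_pseudo_oval_equiv (O1 O2 : {set {set 'rV[L]_3}}) :
  proj_equiv O1 O2 ->
  proj_equiv (elementary_pseudo_oval phi O1) (elementary_pseudo_oval phi O2).
Proof.
case=> f /gammaL_map_semilinear [sigma [f_inj fD fZ]] f_ovals.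
have [tau [tauD tauM tau1 tauK]] := rmorph_restrict_subfield iota sigma.
pose g := phi \o f \o psi; exists g.
  apply: (semilinear_gammaL_map tauD tauM tau1).
  - by do 2!apply: inj_comp => //; apply: can_inj.
  - by move=> u v; rewrite /g /= psiD fD phiD.
  - by move=> a w; rewrite /g /= psiZ fZ -tauK phiZ.
rewrite -f_ovals /elementary_pseudo_oval !imset_of_imsets; apply: eq_imset => P.
by apply: eq_imset => u; rewrite /g /= phiK.
Qed.

End Identification.

Theorem proposition1 (F L : finFieldType) (iota : {rmorphism F -> L}) (n : nat)
  (hn : (0 < n)%N) (hL : #|L| = (#|F| ^ n)%N)
  (phi : 'rV[L]_3 -> 'rV[F]_(3 * n)) (hphi : identification iota phi)
  (O1 O2 : {set {set 'rV[L]_3}}) (hO1 : oval O1) (hO2 : oval O2) :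
  proj_equiv (elementary_pseudo_oval phi O1) (elementary_pseudo_oval phi O2)
  <-> proj_equiv O1 O2.
Proof.
case: hphi => -[psi phiK psiK] phi_lin; split.
- exact: pseudo_oval_equiv_oval_equiv phiK psiK phi_lin _ _ hO1 hO2.
- exact: oval_equiv_pseudo_oval_equiv phiK psiK phi_lin _ _.
Qed.
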